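(* Let $n,d$ be positive integers with $d$ dividing $n$, let $C_n=\langle a\mid a^n=e\rangle$, let $l$ be an integer, and let $\Delta=\{a^{jn/d+l}: j=0,\dots,d-1\}$. For complex numbers $W_0,\dots,W_{d-1}$, the operator $W=\sum_{j=0}^{d-1}W_jU_{a^{jn/d+l}}$ on $\ell^2(C_n)$ is unitary if and only if there exist real numbers $\theta_0,\dots,\theta_{d-1}$ such that $W_j=\frac1d\sum_{k=0}^{d-1}e^{i\theta_k}e^{2\pi i kj/d}$ for all $j=0,\dots,d-1$.
   Context: For a group $\Gamma$, let $\ell^2(\Gamma)$ have orthonormal basis $\{|g\rangle\}_{g\in\Gamma}$ and for $\delta\in\Gamma$ let $U_\delta$ be the unitary with $U_\delta|g\rangle=|g\delta\rangle$. Such a unitary $W$ with all $W_j$ nonzero is a homogeneous scalar quantum walk on the Cayley graph $C_\Delta(C_n)$ (vertex set $C_n$, directed edges $(g,g\delta)$ for $\delta\in\Delta$). *)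

From HB Require Import structures.
From mathcomp Require Import all_boot all_order all_algebra.
From mathcomp Require Import complex.
From mathcomp Require Import reals trigo.
Set Implicit Arguments. Unset Strict Implicit. Unset Printing Implicit Defensive.
Import Order.TTheory GRing.Theory Num.Theory.
Local Open Scope ring_scope.

(* The cyclic group C_n = <a | a^n = e> is identified with 'I_n, a^k <-> k mod n.
   The basis vector |g> of l^2(C_n) is the g-th standard basis column vector, so an
   operator is an n x n complex matrix A with A h g = <h| A |g>. *)

(* U_{a^m} |g> = |g a^m> = |(g + m) mod n>, for m : int. *)
Definition shiftU (R : realType) (n : nat) (m : int) : 'M[R[i]]_n :=
  \matrix_(h < n, g < n) ((h%:Z == ((g%:Z + m) %% n%:Z)%Z)%:R).

Definition adjmx (R : realType) (n : nat) (A : 'M[R[i]]_n) : 'M[R[i]]_n :=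
  (map_mx Num.conj A)^T.

Definition unitary_mx (R : realType) (n : nat) (A : 'M[R[i]]_n) : Prop :=
  A *m adjmx A = 1%:M /\ adjmx A *m A = 1%:M.

Definition cexpi (R : realType) (theta : R) : R[i] := (cos theta +i* sin theta)%C.

(* Write the operator as U_l A with A = sum_j W_j V^j, where V = U_{a^(n/d)} has order d,
   and let z = e^(2 pi i/d). The matrices P_k = d^-1 sum_j z^(jk) V^j are nonzero, sum to 1,
   and satisfy V P_k = z^-k P_k and V^* P_k = z^k P_k. Hence A P_k = L_k P_k and
   A^* P_k = conj(L_k) P_k, where L is the discrete Fourier transform of W, so A is unitary
   iff every |L_k| = 1; inverting the Fourier transform gives W_j = d^-1 sum_k L_k z^(jk). *)

From HB Require Import structures.
From mathcomp Require Import all_boot all_order all_algebra.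
From mathcomp Require Import complex.
From mathcomp Require Import reals trigo.
From mathcomp Require Import ring lra.
Set Implicit Arguments. Unset Strict Implicit. Unset Printing Implicit Defensive.
Import Order.TTheory GRing.Theory Num.Theory.
Local Open Scope ring_scope.

Lemma sum_unity_root (R : idomainType) (d : nat) (u : R) :
  u ^+ d = 1 -> \sum_(k < d) u ^+ k = if u == 1 then d%:R else 0.
Proof.
move=> ud1; have [->|u_neq1] := eqVneq u 1.
  by rewrite (eq_bigr (fun=> 1)) => [|k _]; rewrite ?sumr_const ?card_ord ?expr1n.
have /eqP := subrX1 u d; rewrite ud1 subrr eq_sym mulf_eq0 subr_eq0.
by rewrite (negPf u_neq1) => /eqP.
Qed.

Lemma sum_ord_cyclic (V : nmodType) (d : nat) (G : nat -> V) :
  (forall i, G (i %% d)%N = G i) -> \sum_(j < d) G j.+1 = \sum_(j < d) G j.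
Proof.
move=> G_mod; rewrite [RHS](reindex_inj (@ordS_inj d)) /=.
by apply: eq_bigr => j _; rewrite G_mod.
Qed.

Lemma conj_unity_root (C : numClosedFieldType) (d : nat) (z : C) :
  (0 < d)%N -> z ^+ d = 1 -> z^* = z^-1.
Proof.
move=> d_gt0 zd1.
have /eqP norm_z : `|z| == 1.
  by rewrite -(pexpr_eq1 d_gt0) // -normrX zd1 normr1.
by rewrite invC_norm norm_z expr1n invr1 mul1r.
Qed.

Section DiscreteFourier.
Variables (F : numFieldType) (d : nat) (z : F).
Hypothesis z_prim : d.-primitive_root z.

Definition dft (W : 'I_d -> F) (k : 'I_d) : F := \sum_(j < d) W j * z ^- (j * k).

Definition idft (L : 'I_d -> F) (j : 'I_d) : F :=
  d%:R^-1 * \sum_(k < d) L k * z ^+ (j * k).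

Lemma prim_root_orthogonal (i i' : 'I_d) :
  \sum_(k < d) z ^+ (i * k) * z ^- (i' * k) = if i == i' then d%:R else 0.
Proof.
have z_neq0 : z != 0 by rewrite (prim_root_eq0 z_prim) -lt0n (prim_order_gt0 z_prim).
under eq_bigr do rewrite !exprM -exprVn -exprMn.
rewrite sum_unity_root; last first.
  rewrite exprMn exprVn -!exprM !(mulnC _ d) !exprM (prim_expr_order z_prim).
  by rewrite !expr1n invr1 mulr1.
rewrite (can2_eq (divfK _) (mulfK _)) ?expf_neq0 // mul1r.
by rewrite (eq_prim_root_expr z_prim) !modn_small.
Qed.

Lemma sum_prim_root_expr (j : 'I_d) :
  \sum_(k < d) z ^+ (j * k) = if j == 0%N :> nat then d%:R else 0.
Proof.
under eq_bigr do rewrite exprM.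
rewrite sum_unity_root; last by rewrite exprAC (prim_expr_order z_prim) expr1n.
rewrite -(prim_order_dvd z_prim).
by case: j => [[|j] lt_jd] /=; rewrite ?dvdn0 ?gtnNdvd.
Qed.

Let d_neq0 : d%:R != 0 :> F.
Proof. by rewrite pnatr_eq0 -lt0n (prim_order_gt0 z_prim). Qed.

Lemma idftK (W : 'I_d -> F) (j : 'I_d) : idft (dft W) j = W j.
Proof.
rewrite /idft /dft.
under eq_bigr do rewrite mulr_suml.
rewrite exchange_big /=.
under eq_bigr => i _ do under eq_bigr => k _ do rewrite -mulrA [_ ^- _ * _]mulrC.
under eq_bigr do rewrite -mulr_sumr prim_root_orthogonal.
rewrite (bigD1 j) //= eqxx big1 => [|i /negPf]; last by rewrite eq_sym => ->; rewrite mulr0.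
by rewrite addr0 mulrC mulfK.
Qed.

Lemma dftK (L : 'I_d -> F) (k : 'I_d) : dft (idft L) k = L k.
Proof.
rewrite /idft /dft.
under eq_bigr do rewrite mulr_sumr mulr_suml.
rewrite exchange_big /=.
under eq_bigr => i _ do under eq_bigr => j _ do rewrite mulrCA -!mulrA (mulnC j) (mulnC j).
under eq_bigr do rewrite -mulr_sumr -mulr_sumr prim_root_orthogonal.
rewrite (bigD1 k) //= eqxx big1 => [|i /negPf ->]; last by rewrite !mulr0.
by rewrite addr0 mulVf ?mulr1.
Qed.

End DiscreteFourier.

Lemma mul_sum_powZ_eigen (K : comNzRingType) (A : algType K) (d : nat)
    (X P : A) (mu : K) (c : 'I_d -> K) :
  X * P = mu *: P ->
  (\sum_(j < d) c j *: X ^+ j) * P = (\sum_(j < d) c j * mu ^+ j) *: P.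
Proof.
move=> XP.
have XjP j : X ^+ j * P = mu ^+ j *: P.
  elim: j => [|j IH]; first by rewrite mul1r scale1r.
  by rewrite exprSr -mulrA XP -scalerAr IH scalerA -exprS.
rewrite big_distrl scaler_suml /=; apply: eq_bigr => j _.
by rewrite -scalerAl XjP scalerA.
Qed.

Section Adjoint.
Variables (R : realType) (n : nat).
Implicit Types A B : 'M[R[i]]_n.

Lemma adjmxM A B : adjmx (A *m B) = adjmx B *m adjmx A.
Proof. by rewrite /adjmx map_mxM trmx_mul. Qed.

Lemma adjmx1 : adjmx (1%:M : 'M[R[i]]_n) = 1%:M.
Proof. by rewrite /adjmx map_mx1 trmx1. Qed.

Lemma adjmxZ c A : adjmx (c *: A) = c^* *: adjmx A.
Proof. by apply/matrixP => i j; rewrite !mxE rmorphM. Qed.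

Lemma adjmx_sum (I : finType) (F : I -> 'M[R[i]]_n) :
  adjmx (\sum_i F i) = \sum_i adjmx (F i).
Proof.
apply/matrixP => i j; rewrite !mxE !summxE rmorph_sum.
by apply: eq_bigr => k _; rewrite !mxE.
Qed.

Lemma unitary_mxE A : unitary_mx A <-> adjmx A *m A = 1%:M.
Proof. by split=> [[]|AA1] //; split; first exact: mulmx1C. Qed.

Lemma unitary_mxMl B A : unitary_mx B -> unitary_mx (B *m A) <-> unitary_mx A.
Proof.
move=> /unitary_mxE BB1; rewrite !unitary_mxE adjmxM.
by rewrite mulmxA -(mulmxA _ _ B) BB1 mulmx1.
Qed.

End Adjoint.

Lemma adjmxX (R : realType) (n j : nat) (A : 'M[R[i]]_n.+1) :
  adjmx (A ^+ j) = adjmx A ^+ j.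
Proof.
elim: j => [|j IH]; first exact: adjmx1.
by rewrite exprS exprSr -IH -!mulmxE adjmxM.
Qed.

Section EigenProjections.
Variables (R : realType) (n d : nat) (V : 'M[R[i]]_n.+1) (z : R[i]).
Hypotheses (z_prim : d.-primitive_root z) (V_order : V ^+ d = 1)
  (V_unitary : adjmx V * V = 1)
  (V_free : forall c : 'I_d -> R[i], \sum_(j < d) c j *: V ^+ j = 0 -> forall j, c j = 0).

Let d_gt0 : (0 < d)%N := prim_order_gt0 z_prim.
Let z_neq0 : z != 0. Proof. by rewrite (prim_root_eq0 z_prim) -lt0n. Qed.

Definition eigenproj (k : 'I_d) : 'M[R[i]]_n.+1 :=
  d%:R^-1 *: \sum_(j < d) z ^+ (j * k) *: V ^+ j.

Lemma mulV_eigenproj k : V * eigenproj k = z ^- k *: eigenproj k.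
Proof.
suff zVP : z ^+ k *: (V * eigenproj k) = eigenproj k.
  by rewrite -[in RHS]zVP scalerA mulVf ?scale1r ?expf_neq0.
rewrite /eigenproj -scalerAr scalerA mulrC -scalerA; congr (_ *: _).
rewrite mulr_sumr scaler_sumr.
rewrite -(@sum_ord_cyclic _ d (fun i => z ^+ (i * k) *: V ^+ i)) => [|i].
  by apply: eq_bigr => j _; rewrite -scalerAr scalerA -exprD -exprS mulSn.
by rewrite (expr_mod _ V_order) -(prim_expr_mod z_prim) modnMml (prim_expr_mod z_prim).
Qed.

Lemma mul_adjV_eigenproj k : adjmx V * eigenproj k = z ^+ k *: eigenproj k.
Proof.
rewrite -{1}[eigenproj k]scale1r -(mulfV (expf_neq0 k z_neq0)) -scalerA.
by rewrite -mulV_eigenproj -scalerAr mulrA V_unitary mul1r.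
Qed.

Lemma sum_eigenproj : \sum_(k < d) eigenproj k = 1.
Proof.
rewrite -scaler_sumr exchange_big /=.
under eq_bigr do rewrite -scaler_suml (sum_prim_root_expr z_prim).
rewrite (bigD1 (Ordinal d_gt0)) //= big1 => [|j /negPf j_neq0]; last first.
  by rewrite -val_eqE /= in j_neq0; rewrite j_neq0 scale0r.
by rewrite addr0 scalerA mulVf ?pnatr_eq0 -?lt0n // scale1r expr0.
Qed.

Lemma eigenproj_neq0 k : eigenproj k != 0.
Proof.
apply/eqP; rewrite /eigenproj scaler_sumr.
under eq_bigr do rewrite scalerA.
move=> /V_free /(_ (Ordinal d_gt0)) /eqP /=.
by rewrite mul0n expr0 mulr1 invr_eq0 pnatr_eq0 eqn0Ngt d_gt0.
Qed.

Section Unitarity.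
Variable W : 'I_d -> R[i].
Let A := \sum_(j < d) W j *: V ^+ j.

Lemma mul_eigenproj k : A * eigenproj k = dft z W k *: eigenproj k.
Proof.
rewrite (mul_sum_powZ_eigen _ (mulV_eigenproj k)); congr (_ *: _).
by apply: eq_bigr => j _; rewrite exprVn -exprM mulnC.
Qed.

Lemma mul_adj_eigenproj k : adjmx A * eigenproj k = (dft z W k)^* *: eigenproj k.
Proof.
rewrite adjmx_sum; under eq_bigr do rewrite adjmxZ adjmxX.
rewrite (mul_sum_powZ_eigen _ (mul_adjV_eigenproj k)); congr (_ *: _).
rewrite rmorph_sum /=; apply: eq_bigr => j _.
rewrite rmorphM /= fmorphV rmorphXn /= (conj_unity_root d_gt0 (prim_expr_order z_prim)).
by rewrite exprVn invrK -exprM mulnC.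
Qed.

Lemma adjmx_mul_eq1_iff_dft :
  adjmx A * A = 1 <-> forall k, (dft z W k)^* * dft z W k = 1.
Proof.
split=> [AA1 k | unit_dft].
  have : eigenproj k = ((dft z W k)^* * dft z W k) *: eigenproj k.
    rewrite -{1}[eigenproj k]mul1r -AA1 -mulrA mul_eigenproj -scalerAr.
    by rewrite mul_adj_eigenproj scalerA mulrC.
  move/eqP; rewrite -subr_eq0 -{1}[eigenproj k]scale1r -scalerBl scalemx_eq0.
  by rewrite (negPf (eigenproj_neq0 k)) orbF subr_eq0 eq_sym => /eqP.
rewrite -[LHS]mulr1 -sum_eigenproj mulr_sumr; apply: eq_bigr => k _.
by rewrite -mulrA mul_eigenproj -scalerAr mul_adj_eigenproj scalerA mulrC unit_dft scale1r.
Qed.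

End Unitarity.

End EigenProjections.

Section CyclicShift.
Variables (R : realType) (N : nat).
Local Notation n := N.+1.
Local Notation U := (shiftU R n).

Definition ordz (a : int) : 'I_n := inord `|(a %% n)%Z|%N.

Lemma ordzE a : (ordz a : nat)%:Z = (a %% n)%Z.
Proof.
rewrite /ordz inordK ?gez0_abs ?modz_ge0 //.
by rewrite -ltz_nat gez0_abs ?modz_ge0 ?ltz_pmod.
Qed.

Lemma ordz_nat (x : nat) : (x < n)%N -> ordz x%:Z = x :> nat.
Proof. by move=> lt_xn; apply/eqP; rewrite -eqz_nat ordzE modz_small. Qed.

Lemma ordz_ord (g : 'I_n) : ordz g%:Z = g.
Proof. exact/val_inj/ordz_nat. Qed.

Lemma ordzDl a b : ordz ((ordz a)%:Z + b) = ordz (a + b).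
Proof. by apply: val_inj; apply/eqP; rewrite -eqz_nat !ordzE modzDml. Qed.

Lemma shiftUE a (h g : 'I_n) : U a h g = (h == ordz (g%:Z + a))%:R.
Proof. by rewrite mxE -val_eqE -eqz_nat ordzE. Qed.

Lemma shiftU_modz a : U (a %% n)%Z = U a.
Proof. by apply/matrixP => h g; rewrite !mxE modzDmr. Qed.

Lemma shiftUD a b : U a * U b = U (a + b).
Proof.
apply/matrixP => h g; rewrite mxE (bigD1 (ordz (g%:Z + b))) //=.
rewrite big1 => [|k /negPf k_neq].
  by rewrite !shiftUE eqxx mulr1 addr0 ordzDl -addrA [b + a]addrC.
by rewrite shiftUE [U b k g]shiftUE k_neq mulr0.
Qed.

Lemma shiftU0 : U 0 = 1.
Proof. by apply/matrixP => h g; rewrite shiftUE addr0 ordz_ord mxE. Qed.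

Lemma shiftUX a j : U a ^+ j = U (a *+ j).
Proof.
elim: j => [|j IH]; first by rewrite expr0 mulr0n shiftU0.
by rewrite exprS IH shiftUD mulrS.
Qed.

Lemma adjmx_shiftU a : adjmx (U a) = U (- a).
Proof.
apply/matrixP => h g; rewrite /adjmx 2!mxE !shiftUE rmorph_nat.
congr (nat_of_bool _)%:R.
by apply/idP/idP => /eqP ->; rewrite ordzDl ?addrK ?subrK ordz_ord.
Qed.

Lemma adjmx_shiftUK a : adjmx (U a) * U a = 1.
Proof. by rewrite adjmx_shiftU shiftUD addNr shiftU0. Qed.

Lemma unitary_shiftU a : unitary_mx (U a).
Proof. exact/unitary_mxE/adjmx_shiftUK. Qed.

Section Divisor.
Variables d m : nat.
Hypothesis dm : (d * m)%N = n.

Let shiftU_powE j : U m%:Z ^+ j = U (j * m)%N%:Z.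
Proof. by rewrite shiftUX -mulr_natl natz. Qed.

Lemma shiftU_order : U m%:Z ^+ d = 1.
Proof. by rewrite shiftU_powE dm -shiftU_modz modzz shiftU0. Qed.

Lemma shiftU_free (c : 'I_d -> R[i]) :
  \sum_(j < d) c j *: U m%:Z ^+ j = 0 -> forall j, c j = 0.
Proof.
have m_gt0 : (0 < m)%N by move: dm; case: (m) => //; rewrite muln0.
have ordz_mulE (i j : 'I_d) : (ordz (i * m)%N%:Z == ordz (j * m)%N%:Z) = (i == j).
  by rewrite -val_eqE /= !ordz_nat ?eqn_pmul2r // -dm ltn_pmul2r.
move=> sum0 j; move/matrixP/(_ (ordz (j * m)%N%:Z) ord0): sum0.
rewrite summxE (bigD1 j) //= big1 => [|i /negPf i_neq_j];
  rewrite !mxE shiftU_powE shiftUE add0r.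
  by rewrite ordz_mulE eqxx mulr1 addr0.
by rewrite ordz_mulE eq_sym i_neq_j mulr0.
Qed.

End Divisor.

End CyclicShift.

Section ComplexExponential.
Variable R : realType.
Implicit Types x y : R.

Lemma cexpi0 : cexpi (0 : R) = 1.
Proof. by rewrite /cexpi cos0 sin0. Qed.

Lemma cexpiD x y : cexpi (x + y) = cexpi x * cexpi y.
Proof. by apply/eqP; rewrite /cexpi cosD sinD eq_complex /= eqxx addrC eqxx. Qed.

Lemma cexpiMn x k : cexpi (x *+ k) = cexpi x ^+ k.
Proof.
elim: k => [|k IH]; first by rewrite mulr0n cexpi0.
by rewrite mulrS cexpiD IH exprS.
Qed.

Lemma conj_cexpi x : (cexpi x)^* = cexpi (- x).
Proof. by rewrite /cexpi cosN sinN. Qed.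

Lemma cexpi_neq1 x : 0 < x < pi *+ 2 -> cexpi x != 1.
Proof.
move=> /andP[x_gt0 x_lt]; apply/eqP => /eqP.
rewrite eq_complex /= => /andP[/eqP cos_x _].
set y := x / 2.
have x_half : x = y *+ 2 by rewrite /y -mulr_natr divfK ?pnatr_eq0.
have sin_y_gt0 : 0 < sin y.
  by apply: sin_gt0_pi; rewrite divr_gt0 //= ltr_pdivrMr // mulr_natr.
have cos_y2 : cos y ^+ 2 = 1 by move: cos_x; rewrite x_half cos_mulr2n; lra.
have /eqP : sin y ^+ 2 = 0 by rewrite sin2cos2 cos_y2 subrr.
by rewrite sqrf_eq0 gt_eqF.
Qed.

Lemma cexpi_onto (z : R[i]) : z^* * z = 1 -> exists theta, cexpi theta = z.
Proof.
case: z => a b /eqP; rewrite eq_complex /= => /andP[/eqP norm1 _].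
have ab1 : a ^+ 2 + b ^+ 2 = 1 by rewrite -norm1; ring.
have a_bounds : -1 <= a <= 1.
  rewrite -ler_norml -(@ler_pXn2r _ 2) ?nnegrE // expr1n real_normK ?num_real //.
  by rewrite -ab1 lerDl sqr_ge0.
have sin_acos_a : sin (acos a) = `|b|.
  by rewrite sin_acos // -ab1 addrC addKr sqrtr_sqr.
have [b_ge0 | b_lt0] := lerP 0 b.
  by exists (acos a); rewrite /cexpi acosK ?in_itv // sin_acos_a ger0_norm.
exists (- acos a).
by rewrite /cexpi cosN sinN acosK ?in_itv // sin_acos_a ltr0_norm ?opprK.
Qed.

Lemma prim_root_cexpi (d : nat) :
  (0 < d)%N -> d.-primitive_root (cexpi (2 * pi / d%:R : R)).
Proof.
move=> d_gt0; have d_pos : (0 : R) < d%:R by rewrite ltr0n.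
apply/andP; split => //; apply/forallP => t; rewrite unity_rootE -cexpiMn.
have [t_lt | t_gt | ->] := ltngtP t.+1 d.
- have -> : 2 * pi / d%:R *+ t.+1 = pi *+ 2 * (t.+1%:R / d%:R) :> R.
    by rewrite -mulr_natr mulr_natl -mulrA [_^-1 * _]mulrC.
  have two_pi_gt0 : 0 < pi *+ 2 :> R by rewrite mulrn_wgt0 ?pi_gt0.
  rewrite eqbF_neg cexpi_neq1 // mulr_gt0 ?divr_gt0 //= gtr_pMr //.
  by rewrite ltr_pdivrMr // mul1r ltr_nat.
- by rewrite ltnNge ltn_ord in t_gt.
- rewrite eqb_id -[X in cexpi X]mulr_natr divfK ?lt0r_neq0 //.
  by rewrite /cexpi mulr_natl cos2pi sin2pi.
Qed.

End ComplexExponential.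

Theorem mainTheorem10 (R : realType) (n d : nat) (hn : (0 < n)%N) (hd : (0 < d)%N)
    (hdn : (d %| n)%N) (l : int) (W : 'I_d -> R[i]) :
  unitary_mx (\sum_(j < d) W j *: shiftU R n ((j * (n %/ d))%N%:Z + l))
  <->
  exists theta : 'I_d -> R, forall j : 'I_d,
    W j = d%:R^-1 * \sum_(k < d)
            cexpi (theta k) * cexpi (2 * pi * k%:R * j%:R / d%:R).
Proof.
case: n hn hdn => [//|N] _ hdn; set m := (N.+1 %/ d)%N.
have dm : (d * m)%N = N.+1 by rewrite mulnC divnK.
pose z := cexpi (2 * pi / d%:R : R).
have z_prim : d.-primitive_root z := prim_root_cexpi R hd.
pose V := shiftU R N.+1 m%:Z.
have -> : \sum_(j < d) W j *: shiftU R N.+1 ((j * m)%N%:Z + l) =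
    shiftU R N.+1 l *m \sum_(j < d) W j *: V ^+ j.
  rewrite mulmx_sumr; apply: eq_bigr => j _.
  by rewrite -scalemxAr mulmxE shiftUX shiftUD -mulr_natl natz addrC.
rewrite (unitary_mxMl _ (unitary_shiftU _ _ _)) unitary_mxE mulmxE idmxE.
rewrite (adjmx_mul_eq1_iff_dft z_prim (shiftU_order R dm) (adjmx_shiftUK _ _ _) (shiftU_free dm)).
have root_powE (j k : 'I_d) : cexpi (2 * pi * k%:R * j%:R / d%:R) = z ^+ (j * k).
  by rewrite -cexpiMn -[_ *+ _ in RHS]mulr_natr natrM; congr cexpi; ring.
split => [unit_dft | [theta W_idft] k].
  have [theta thetaE] := fin_all_exists (fun k => cexpi_onto (unit_dft k)).
  exists theta => j; rewrite -(idftK z_prim W j) /idft; congr (_ * _).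
  by apply: eq_bigr => k _; rewrite thetaE root_powE.
have -> : dft z W k = cexpi (theta k).
  transitivity (dft z (idft z (fun k => cexpi (theta k))) k); last exact: dftK.
  apply: eq_bigr => j _; rewrite W_idft /idft; congr (_ * _ * _).
  by apply: eq_bigr => i _; rewrite root_powE.
by rewrite conj_cexpi -cexpiD addNr cexpi0.
Qed.
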